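(* Assuming each arithmetic operation in $\mathbb{K}$ takes constant time, the $\mu$-Basis Algorithm (described in the context) on an input non-zero row vector $a\in\mathbb{K}[s]^n$ of degree $d$, $n>1$, has computational complexity $O(d^2n+d^3+n^2)$.
   Context: $\mu$-Basis Algorithm on $a=\sum_{j=0}^d c_js^j$ ($c_j\in\mathbb{K}^n$ row vectors): (1) determine $d$, the $c_j$, and form $A\in\mathbb{K}^{(2d+1)\times n(d+1)}$ whose $(i,\,kn+r)$ entry is the $r$-th entry of $c_{i-1-k}$ (zero if $i-1-k\notin\{0,\dots,d\}$). (2) Compute a partial reduced row-echelon form $E$ of $A$ by Gauss–Jordan elimination, processing columns left to right, carrying out row operations only on pivotal columns and basic non-pivotal columns, skipping non-pivotal columns whose index is congruent modulo $n$ to an already found non-pivotal index, and stopping forward elimination once $n-1$ basic non-pivotal columns are found; then perform backward elimination and normalization on those columns. (A column is pivotal if it is the first column and non-zero or independent of previous columns; basic non-pivotal indices are the minimal elements of the classes modulo $n$ of the non-pivotal indices.) (3) With $p$ the list of pivotal indices and $\tilde q=(\tilde q_1,\dots,\tilde q_{n-1})$ the basic non-pivotal indices, initialize an $n\times(n-1)$ zero matrix $M$; for each $j$ add $s^{\mathrm{quo}(\tilde q_j-1,n)}$ to $M_{\mathrm{rem}(\tilde q_j-1,n)+1,\,j}$; for each $i\le|p|$ and $j\le n-1$ subtract $E_{i,\tilde q_j}s^{\mathrm{quo}(p_i-1,n)}$ from $M_{\mathrm{rem}(p_i-1,n)+1,\,j}$; output $M$. *)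

(* An explicit cost model for the mu-Basis Algorithm:
   the algorithm is written in a simple "cost monad" (value, step count).
   Charged unit-cost steps: every field operation (+,-,*,/), every zero test
   of a field element, every write of a matrix/array entry (including
   polynomial-coefficient updates), and every loop iteration.  Integer index
   arithmetic and reads are free (they are O(1) and always accompany a
   charged step). *)
From HB Require Import structures.
From mathcomp Require Import all_boot all_order all_algebra.
Set Implicit Arguments.
Unset Strict Implicit.
Unset Printing Implicit Defensive.
Import GRing.Theory.
Local Open Scope ring_scope.

Definition Cost (A : Type) : Type := (A * nat)%type.
Definition cret {A : Type} (x : A) : Cost A := (x, 0%N).
Definition cbind {A B : Type} (m : Cost A) (f : A -> Cost B) : Cost B :=
  let y := f m.1 in (y.1, (m.2 + y.2)%N).
Notation "'LET' x <- m 'IN' f" := (cbind m (fun x => f))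
  (at level 200, x name, right associativity).
Definition tick : Cost unit := (tt, 1%N).
Definition cfor {T S : Type} (l : seq T) (s0 : S) (body : T -> S -> Cost S)
  : Cost S :=
  foldl (fun acc k => LET s <- acc IN LET _u <- tick IN body k s) (cret s0) l.

Section MuBasis.
Variable K : fieldType.

Definition fsub (x y : K) : Cost K := (x - y, 1%N).
Definition fmul (x y : K) : Cost K := (x * y, 1%N).
Definition fdiv (x y : K) : Cost K := (x / y, 1%N).
Definition fisz (x : K) : Cost bool := (x == 0, 1%N).

(* matrices over K, 0-indexed, with unit-cost entry writes *)
Definition Mat := nat -> nat -> K.
Definition mset (E : Mat) (i j : nat) (v : K) : Cost Mat :=
  (fun i' j' => if (i' == i) && (j' == j) then v else E i' j', 1%N).

(* matrices over K[s]; updating an entry (one coefficient) costs one step *)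
Definition PMat := nat -> nat -> {poly K}.
Definition pset (M : PMat) (i j : nat) (v : {poly K}) : Cost PMat :=
  (fun i' j' => if (i' == i) && (j' == j) then v else M i' j', 1%N).

Definition rdeg (n : nat) (a : 'rV[{poly K}]_n) : nat :=
  \max_(i < n) (size (a ord0 i)).-1.

(* r-th entry (0-indexed) of c_t, i.e. coefficient of s^t in a_r *)
Definition coefa (n : nat) (a : 'rV[{poly K}]_n) (r t : nat) : K :=
  match (insub r : option 'I_n) with Some i => (a ord0 i)`_t | None => 0 end.

(* Step (1): determine d (n steps) and form A (one write per entry).
   0-indexed: A(i, k*n + r) = (c_{i-k})_r. *)
Definition step1 (n : nat) (a : 'rV[{poly K}]_n) : Cost (nat * Mat) :=
  LET d <- ((rdeg a, n) : Cost nat) IN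
  let m := (2 * d + 1)%N in let N := (n * (d + 1))%N in
  LET A <- cfor (iota 0 m) (fun _ _ => 0 : K) (fun i A =>
             cfor (iota 0 N) A (fun col A =>
               let k := (col %/ n)%N in let r := (col %% n)%N in
               mset A i col (if (k <= i)%N && (i - k <= d)%N
                             then coefa a r (i - k) else 0))) IN
  cret (d, A).

Record FState := FS {
  fE : Mat;
  fr : nat;                              (* number of pivots found so far *)
  fops : seq (nat * nat * (nat -> K));   (* recorded row operations *)
  fp : seq nat;                          (* pivotal indices *)
  fq : seq nat;                          (* basic non-pivotal indices *)
  fseen : nat -> bool                    (* residues mod n of non-pivotal indices *)
}.

(* a recorded row operation (r, i, mu): swap rows r and i, then
   row i' -= mu i' * row r for i' > r; applied to column j only *)
Definition apply_op (m j : nat) (E : Mat) (op : nat * nat * (nat -> K)) : Cost Mat :=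
  let: (r, i, mu) := op in
  let x := E r j in let y := E i j in
  LET E <- mset E r j y IN LET E <- mset E i j x IN
  cfor (iota r.+1 (m - r.+1)) E (fun i' E =>
    LET t <- fmul (mu i') (E r j) IN LET u <- fsub (E i' j) t IN mset E i' j u).

Definition find_piv (m r j : nat) (E : Mat) : Cost (option nat) :=
  cfor (iota r (m - r)) None (fun i o =>
    match o with
    | Some _ => cret o
    | None => LET z <- fisz (E i j) IN cret (if z then None else Some i)
    end).

Definition elim (m r i j : nat) (E : Mat) : Cost (Mat * (nat -> K)) :=
  let x := E r j in let y := E i j in
  LET E <- mset E r j y IN LET E <- mset E i j x IN
  cfor (iota r.+1 (m - r.+1)) (E, fun _ => 0 : K) (fun i' st =>
    let: (E, mu) := st in
    LET c <- fdiv (E i' j) (E r j) IN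
    LET E <- mset E i' j 0 IN
    cret (E, fun k => if k == i' then c else mu k)).

(* processing column j: stop once n-1 basic non-pivotal columns are found;
   skip columns congruent mod n to a found non-pivotal index; otherwise
   bring the column up to date with all previous row operations (so row
   operations are carried out only on pivotal / basic non-pivotal columns),
   and decide whether it is pivotal *)
Definition fstep (n m : nat) (j : nat) (s : FState) : Cost FState :=
  if size (fq s) == n.-1 then cret s
  else if fseen s (j %% n)%N then cret s
  else
    LET E <- cfor (fops s) (fE s) (fun op E => apply_op m j E op) IN
    LET o <- find_piv m (fr s) j E IN
    match o with
    | Some i =>
        LET res <- elim m (fr s) i j E IN
        cret (FS res.1 (fr s).+1 (rcons (fops s) (fr s, i, res.2))
                 (rcons (fp s) j) (fq s) (fseen s))
    | None =>
        LET _u <- tick IN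
        cret (FS E (fr s) (fops s) (fp s) (rcons (fq s) j)
                 (fun k => if k == (j %% n)%N then true else fseen s k))
    end.

Definition forward (n m N : nat) (A : Mat) : Cost FState :=
  LET _u <- cfor (iota 0 n) tt (fun _ _ => cret tt) IN (* init residue array *)
  cfor (iota 0 N) (FS A 0 [::] [::] [::] (fun _ => false)) (fstep n m).

Definition backward (s : FState) : Cost Mat :=
  let cols := fp s ++ fq s in
  cfor (rev (iota 0 (fr s))) (fE s) (fun k E =>
    let pk := nth 0%N (fp s) k in
    let piv := E k pk in
    LET E <- cfor cols E (fun c E => LET v <- fdiv (E k c) piv IN mset E k c v) IN
    cfor (iota 0 k) E (fun i E =>
      let f := E i pk in
      cfor cols E (fun c E =>
        LET t <- fmul f (E k c) IN LET u <- fsub (E i c) t IN mset E i c u))).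

(* Step (3), 0-indexed: rem(q-1,n)+1, quo(q-1,n) become q %% n, q %/ n *)
Definition step3 (n : nat) (p q : seq nat) (E : Mat) : Cost PMat :=
  LET M <- cfor (iota 0 n) (fun _ _ => 0 : {poly K}) (fun i M =>
             cfor (iota 0 n.-1) M (fun j M => pset M i j 0)) IN
  LET M <- cfor (iota 0 n.-1) M (fun j M =>
             let qj := nth 0%N q j in
             pset M (qj %% n)%N j (M (qj %% n)%N j + 'X^(qj %/ n)%N)) IN
  cfor (iota 0 (size p)) M (fun i M => cfor (iota 0 n.-1) M (fun j M =>
     let pi := nth 0%N p i in let qj := nth 0%N q j in
     pset M (pi %% n)%N j (M (pi %% n)%N j - (E i qj) *: 'X^(pi %/ n)%N))).

Definition mu_basis (n : nat) (a : 'rV[{poly K}]_n) : Cost 'M[{poly K}]_(n, n.-1) :=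
  LET dA <- step1 a IN
  let d := dA.1 in
  let m := (2 * d + 1)%N in let N := (n * (d + 1))%N in
  LET s <- forward n m N dA.2 IN
  LET E <- backward s IN
  LET M <- step3 n (fp s) (fq s) E IN
  cret (\matrix_(i < n, j < n.-1) M i j).

Definition mu_basis_cost (n : nat) (a : 'rV[{poly K}]_n) : nat := (mu_basis a).2.

End MuBasis.

From HB Require Import structures.
From mathcomp Require Import all_boot all_order all_algebra zify.

(* Step (1) writes the (2d+1) x n(d+1) entries of A.  In the forward
   elimination a column that is not skipped becomes either pivotal (at most
   m = 2d+1 of them, one per row) or basic non-pivotal (at most n-1), and
   processing it costs O(m^2): replaying the at most m recorded row
   operations, searching for a pivot and clearing below it.  Charging that
   cost to the counter of processed columns bounds forward elimination by
   O(n d + m^2 (m + n)).  Backward elimination touches only the m + n - 1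
   processed columns of the at most m pivot rows, O(m^2 (m + n)), and step (3)
   costs O(n (n + m)); everything adds up to O(d^2 n + d^3 + n^2). *)

Section CostCombinators.
Context {T S : Type}.
Implicit Types (l : seq T) (body : T -> S -> Cost S).

Lemma cbind_cost {A B : Type} (m : Cost A) (f : A -> Cost B) :
  (cbind m f).2 = (m.2 + (f m.1).2)%N.
Proof. by []. Qed.

Lemma cfor_cons {k l s0 body} :
  cfor (k :: l) s0 body =
  let s1 := (body k s0).1 in
  ((cfor l s1 body).1, (1 + (body k s0).2 + (cfor l s1 body).2)%N).
Proof.
rewrite /cfor /= {1}/cbind /=; set step := fun acc k => _.
suff shift c s : foldl step (s, c) l =
    ((foldl step (s, 0%N) l).1, (c + (foldl step (s, 0%N) l).2)%N) by rewrite shift.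
elim: l c s => [|k' l IH] c s /=; first by rewrite addn0.
by rewrite /step /cbind /= IH [in RHS]IH /= add0n !addnA.
Qed.

Lemma cfor_cost_le_all (P : pred T) b {l s0 body} :
  all P l -> (forall k s, P k -> ((body k s).2 <= b)%N) ->
  ((cfor l s0 body).2 <= size l * b.+1)%N.
Proof.
move=> Pl Hb; elim: l s0 Pl => [|k l IH] s0 //= /andP[Pk Pl].
rewrite cfor_cons /= mulSn; have := Hb k s0 Pk; have := IH (body k s0).1 Pl; lia.
Qed.

Lemma cfor_cost_le b {l s0 body} :
  (forall k s, ((body k s).2 <= b)%N) -> ((cfor l s0 body).2 <= size l * b.+1)%N.
Proof. by move=> Hb; apply: (@cfor_cost_le_all predT); rewrite ?all_predT. Qed.

Lemma cfor_cost_amortized (I : S -> Prop) (pot : S -> nat) B {l s0 body} :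
  I s0 ->
  (forall k s, I s -> I (body k s).1 /\ ((body k s).2 + B * pot s <= B * pot (body k s).1)%N) ->
  I (cfor l s0 body).1 /\
  ((cfor l s0 body).2 + B * pot s0 <= size l + B * pot (cfor l s0 body).1)%N.
Proof.
move=> I0 Hb; elim: l s0 I0 => [|k l IH] s0 I0 /=; first by rewrite leqnn.
rewrite cfor_cons /=; have [I1 H1] := Hb k s0 I0; have [I2 H2] := IH _ I1.
by split=> //; move: H1 H2; lia.
Qed.

End CostCombinators.

Section MuBasisCost.
Context {K : fieldType}.
Implicit Types (E : Mat K) (s : FState K).

Lemma step1_cost {n} (a : 'rV[{poly K}]_n) :
  ((step1 a).2 <= n + (2 * rdeg a + 1) * (2 * (n * (rdeg a + 1))).+1)%N.
Proof.
rewrite /step1 !cbind_cost /= addn0 leq_add2l.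
apply: (leq_trans (cfor_cost_le (2 * (n * (rdeg a + 1))) _)); last by rewrite size_iota.
by move=> i A; apply: (leq_trans (cfor_cost_le 1 _)); rewrite ?size_iota // mulnC.
Qed.

Lemma apply_op_cost m j E op : ((apply_op m j E op).2 <= 4 * m + 2)%N.
Proof.
case: op => [[r i] mu]; rewrite /apply_op !cbind_cost /= !add1n addn2 !ltnS.
apply: (leq_trans (cfor_cost_le 3 _)) => //; rewrite size_iota; lia.
Qed.

Lemma find_piv_cost m r j E : ((find_piv m r j E).2 <= 2 * m)%N.
Proof.
apply: (leq_trans (cfor_cost_le 1 _)) => [k [i|] //|].
rewrite size_iota; lia.
Qed.

Lemma find_piv_lt {m r j E i} : (find_piv m r j E).1 = Some i -> (r < m)%N.
Proof. by case: ltnP => //; rewrite -subn_eq0 /find_piv => /eqP ->. Qed.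

Lemma elim_cost m r i j E : ((elim m r i j E).2 <= 3 * m + 2)%N.
Proof.
rewrite /elim !cbind_cost /= !add1n addn2 !ltnS.
apply: (leq_trans (cfor_cost_le 2 _)) => [i' [E' mu] //|]; rewrite size_iota; lia.
Qed.

Definition forward_inv m n s :=
  [/\ size (fops s) = fr s, size (fp s) = fr s, (fr s <= m)%N & (size (fq s) <= n.-1)%N].

Definition processed_columns s := (fr s + size (fq s))%N.

Definition column_cost m := (m * (4 * m + 3) + 5 * m + 2)%N.

Lemma fstep_amortized n m j s : forward_inv m n s ->
  forward_inv m n (fstep n m j s).1 /\
  ((fstep n m j s).2 + column_cost m * processed_columns s <=
   column_cost m * processed_columns (fstep n m j s).1)%N.
Proof.
case=> ops_fr p_fr fr_m q_n; rewrite /fstep.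
case: eqP => [_|q_lt]; first by rewrite add0n.
case: ifP => _; first by rewrite add0n.
set E := cfor _ _ _.
have E_cost : (E.2 <= m * (4 * m + 3))%N.
  apply: (leq_trans (cfor_cost_le (4 * m + 2) _)) => [op E'|]; first exact: apply_op_cost.
  by rewrite ops_fr; apply: leq_mul => //; lia.
have piv_cost := find_piv_cost m (fr s) j E.1.
rewrite /cbind; cbv beta zeta; case piv: (find_piv m (fr s) j E.1).1 => [i|].
  have r_m := find_piv_lt piv.
  have := elim_cost m (fr s) i j E.1; set el := elim _ _ _ _ _ => el_cost.
  clearbody el; split; first by split; rewrite /= ?size_rcons ?ops_fr ?p_fr.
  rewrite /processed_columns /= addSn mulnS /column_cost; lia.
split; first by split; rewrite /= ?size_rcons; lia.
rewrite /processed_columns /= size_rcons addnS mulnS /column_cost; lia.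
Qed.

Lemma forward_cost n m N A :
  forward_inv m n (forward n m N A).1 /\
  ((forward n m N A).2 <= n + N + column_cost m * (m + n))%N.
Proof.
have init_cost : ((cfor (iota 0 n) tt (fun _ _ => cret tt)).2 <= n)%N.
  by apply: (leq_trans (cfor_cost_le 0 _)); rewrite ?size_iota ?muln1.
have inv0 : forward_inv m n (FS A 0 [::] [::] [::] (fun _ => false)) by [].
have [inv cost] := cfor_cost_amortized (forward_inv m n) processed_columns (column_cost m)
  (l := iota 0 N) inv0 (fun k s => @fstep_amortized n m k s).
rewrite /forward cbind_cost; split=> //.
move: inv cost; set s := (cfor _ _ _).1 => -[_ _ fr_m q_n].
rewrite size_iota /processed_columns /= => cost.
have : (column_cost m * (fr s + size (fq s)) <= column_cost m * (m + n))%N.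
  by rewrite leq_mul2l leq_add ?orbT ?(leq_trans q_n (leq_pred n)).
lia.
Qed.

Lemma backward_cost {m n s} : forward_inv m n s ->
  ((backward s).2 <= m * (3 * (m + n) + m * (4 * (m + n) + 1)).+1)%N.
Proof.
case=> _ p_fr fr_m q_n; rewrite /backward; set c := (m + n)%N.
have cols_size : (size (fp s ++ fq s) <= c)%N.
  by rewrite size_cat p_fr leq_add ?(leq_trans q_n (leq_pred n)).
apply: (leq_trans (cfor_cost_le_all (fun k => k < m)%N (3 * c + m * (4 * c + 1)) _ _)).
- apply/allP => k; rewrite mem_rev mem_iota => /andP[_ k_lt].
  exact: leq_trans k_lt fr_m.
- move=> k E k_m; rewrite cbind_cost; apply: leq_add.
    apply: (leq_trans (cfor_cost_le 2 _)) => //.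
    by rewrite mulnC leq_mul2l cols_size orbT.
  apply: (leq_trans (cfor_cost_le (4 * c) _)) => [i E'|].
    apply: (leq_trans (cfor_cost_le 3 _)) => //.
    by rewrite mulnC leq_mul2l cols_size orbT.
  by rewrite size_iota addn1 leq_mul2r (ltnW k_m) orbT.
- by rewrite size_rev size_iota leq_mul2r fr_m orbT.
Qed.

Lemma step3_cost n p q E : ((step3 n p q E).2 <= (2 * n + 1) * (n + size p + 1))%N.
Proof.
have row_cost (f : nat -> PMat K -> Cost (PMat K)) M :
    (forall j M, (f j M).2 = 1%N) -> ((cfor (iota 0 n.-1) M f).2 <= 2 * n.-1)%N.
  by move=> f1; apply: (leq_trans (cfor_cost_le 1 _)) => [j M'|]; rewrite ?f1 // size_iota mulnC.
rewrite /step3 !cbind_cost; set L1 := cfor (iota 0 n) _ _.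
set L2 := cfor (iota 0 n.-1) _ _; set L3 := cfor (iota 0 (size p)) _ _.
have h1 : (L1.2 <= n * (2 * n.-1).+1)%N.
  by apply: (leq_trans (cfor_cost_le _ _)) => [i M|]; [exact: row_cost | rewrite size_iota].
have h2 : (L2.2 <= 2 * n.-1)%N by exact: row_cost.
have h3 : (L3.2 <= size p * (2 * n.-1).+1)%N.
  by apply: (leq_trans (cfor_cost_le _ _)) => [i M|]; [exact: row_cost | rewrite size_iota].
have n1 : ((2 * n.-1).+1 <= 2 * n + 1)%N by lia.
have -> : ((2 * n + 1) * (n + size p + 1) =
            n * (2 * n + 1) + (2 * n + 1 + size p * (2 * n + 1)))%N.
  by rewrite mulnC !mulnDl mul1n addnAC -addnA.
apply: leq_add; last apply: leq_add.
- exact: leq_trans h1 (leq_mul (leqnn n) n1).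
- exact: leq_trans h2 (ltnW n1).
- exact: leq_trans h3 (leq_mul (leqnn _) n1).
Qed.

Lemma mu_basis_cost_phases {n} (a : 'rV[{poly K}]_n) :
  let m := (2 * rdeg a + 1)%N in
  let fwd := forward n m (n * (rdeg a + 1)) (step1 a).1.2 in
  let bwd := backward fwd.1 in
  mu_basis_cost a = ((step1 a).2 + fwd.2 + bwd.2 + (step3 n (fp fwd.1) (fq fwd.1) bwd.1).2)%N.
Proof.
move=> m fwd bwd; set s3 := step3 _ _ _ _.
transitivity ((step1 a).2 + (fwd.2 + (bwd.2 + (s3.2 + 0))))%N; first by [].
by rewrite addn0 !addnA.
Qed.

End MuBasisCost.

Lemma monomials_le_cubic d n : (0 < n)%N ->
  [/\ (d <= d ^ 2 * n)%N, (d * n <= d ^ 2 * n)%N, (d ^ 2 <= d ^ 2 * n)%N & (n <= n ^ 2)%N].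
Proof. by move=> n_gt0; split; nia. Qed.

Theorem theorem3 (K : fieldType) :
  exists C : nat, forall (n d : nat) (a : 'rV[{poly K}]_n),
    (1 < n)%N -> (a != 0)%R -> rdeg a = d ->
    (mu_basis_cost a <= C * (d ^ 2 * n + d ^ 3 + n ^ 2))%N.
Proof.
(* The bound holds for a = 0 as well. *)
exists 1000 => n d a n_gt1 _ deg_a.
rewrite mu_basis_cost_phases.
have step1_le := step1_cost a; rewrite deg_a in step1_le *.
have [inv fwd_le] := forward_cost n (2 * d + 1) (n * (d + 1)) (step1 a).1.2.
set s := forward _ _ _ _ in inv fwd_le *.
have bwd_le := backward_cost inv.
have step3_le : ((step3 n (fp s.1) (fq s.1) (backward s.1).1).2 <=
                 (2 * n + 1) * (n + (2 * d + 1) + 1))%N.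
  case: inv => _ p_fr fr_m _; apply: leq_trans (step3_cost _ _ _ _) _.
  by rewrite leq_mul2l leq_add2r leq_add2l p_fr fr_m orbT.
have [] := monomials_le_cubic d n (ltnW n_gt1).
move: step1_le fwd_le bwd_le step3_le; rewrite /column_cost; lia.
Qed.
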